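(* Let $H$ be a complex Hilbert space, $V=\mathcal{L}(H)_{sa}$, $r$ a positive integer and $a,b\in\mathfrak{M}(r)$, the set of projections of rank $r$ in $V$. Then $b\in\mathcal{O}_a$ if and only if $a\in\mathcal{O}_b$.
   Context: $V$ is the set of self-adjoint bounded operators on $H$; a projection is $a=a^2=a^*$. For $a\in\mathfrak{M}(r)$, $V_1(a)=aVa$ is a Jordan algebra (product $x\circ y=\frac12(xy+yx)$) with unit $a$, and the antipodal set of $a$ is $\mathcal{O}_a=\{b\in\mathfrak{M}(r): aba\text{ is not invertible in }V_1(a)\}$. *)

From HB Require Import structures.
From mathcomp Require Import all_boot all_order all_algebra.
From mathcomp Require Import reals complex.
Set Implicit Arguments. Unset Strict Implicit. Unset Printing Implicit Defensive.
Import Order.TTheory GRing.Theory Num.Theory.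
Local Open Scope ring_scope.

Section Hilbert.
Variable R : realType.
Local Notation C := R[i].
Variable H : lmodType C.
Variable ip : H -> H -> C.   (* inner product, linear in the first argument *)

Definition nsq (x : H) : R := complex.Re (ip x x).

Definition is_hilbert_space : Prop :=
  [/\ (forall (k : C) (x y z : H), ip (k *: x + y) z = k * ip x z + ip y z),
      (forall x y : H, ip y x = (ip x y)^*),
      (forall x : H, 0 <= ip x x),
      (forall x : H, ip x x = 0 -> x = 0) &
      (forall u : nat -> H,
         (forall eps : R, 0 < eps -> exists N : nat,
             forall m n : nat, (N <= m)%N -> (N <= n)%N -> nsq (u m - u n) < eps) ->
         exists l : H, forall eps : R, 0 < eps -> exists N : nat,
             forall n : nat, (N <= n)%N -> nsq (u n - l) < eps)].

Definition bounded_linear (f : H -> H) : Prop :=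
  (forall (k : C) (x y : H), f (k *: x + y) = k *: f x + f y) /\
  exists M : R, forall x : H, nsq (f x) <= M * nsq x.

Definition selfadj_bdd (f : H -> H) : Prop :=
  bounded_linear f /\ forall x y : H, ip (f x) y = ip x (f y).

Definition projection (a : H -> H) : Prop := selfadj_bdd a /\ a \o a = a.

Definition range_dim (a : H -> H) (r : nat) : Prop :=
  exists e : 'I_r -> H,
    [/\ (forall i, exists x, e i = a x),
        (forall y, exists c : 'I_r -> C, a y = \sum_(i < r) c i *: e i) &
        (forall c : 'I_r -> C, \sum_(i < r) c i *: e i = 0 -> forall i, c i = 0)].

Definition proj_rank (r : nat) (a : H -> H) : Prop := projection a /\ range_dim a r.

Definition jprod (x y : H -> H) : H -> H :=
  fun h => 2%:R^-1 *: (x (y h) + y (x h)).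

Definition V1 (a : H -> H) (z : H -> H) : Prop :=
  exists X : H -> H, selfadj_bdd X /\ z = a \o X \o a.

(* invertibility in the unital Jordan algebra V_1(a) (unit a):
   x is invertible iff there is y in V_1(a) with x o y = a and x^2 o y = x *)
Definition jinvertible (a x : H -> H) : Prop :=
  exists y : H -> H, [/\ V1 a y, jprod x y = a & jprod (jprod x x) y = x].

Definition antipodal (r : nat) (a b : H -> H) : Prop :=
  proj_rank r b /\ ~ jinvertible a (a \o b \o a).

End Hilbert.

(* aba is invertible in V_1(a) exactly when ran a meets ker b trivially: an
   inverse forces this, and conversely aba is then injective on the finite
   dimensional space ran a, so its inverse there is a polynomial in aba and lies
   in V_1(a).  Now ran a ∩ ker b = 0 says that b maps ran a injectively into
   ran b; both have dimension r, so this map is bijective, hence so is its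
   adjoint a : ran b -> ran a, i.e. ran b ∩ ker a = 0. *)
From HB Require Import structures.
From mathcomp Require Import all_boot all_order all_algebra.
From mathcomp Require Import reals complex.
From mathcomp Require Import ring lra.
From Stdlib Require Import FunctionalExtensionality.
Set Implicit Arguments. Unset Strict Implicit. Unset Printing Implicit Defensive.
Import Order.TTheory GRing.Theory Num.Theory.
Local Open Scope complex_scope.
Local Open Scope ring_scope.

Lemma invmx_horner (F : fieldType) n (A : 'M[F]_n.+1) :
  A \in unitmx -> exists q : {poly F}, invmx A = horner_mx A q.
Proof.
move=> uA; set p := char_poly A.
have p0_neq0 : p`_0 != 0.
  by rewrite char_poly_det mulf_neq0 ?signr_eq0 // -unitfE -unitmxE.
have p_split : p = (p`_0)%:P + drop_poly 1 p * 'X.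
  rewrite -[LHS](poly_take_drop 1%N) expr1; congr (_ + _); apply/polyP => i.
  by rewrite coef_take_poly coefC; case: i.
exists (- (p`_0)^-1 *: drop_poly 1 p).
have qA_A : horner_mx A (- (p`_0)^-1 *: drop_poly 1 p) *m A = 1%:M.
  have := Cayley_Hamilton A; rewrite -/p {1}p_split rmorphD rmorphM /=.
  rewrite horner_mx_C horner_mx_X => /eqP; rewrite addr_eq0 => /eqP CH.
  rewrite linearZ /= -scalemxAl mulmxE -[X in _ *: X]opprK -CH.
  by rewrite scaleNr scalerN opprK scale_scalar_mx mulVf.
by rewrite -[invmx A]mul1mx -qA_A mulmxK.
Qed.

Section InnerProductSpace.
Variables (R : realType) (H : lmodType R[i]) (ip : H -> H -> R[i]).
Local Notation C := R[i].
Hypothesis ipD : forall (k : C) (x y z : H), ip (k *: x + y) z = k * ip x z + ip y z.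
Hypothesis ipC : forall x y : H, ip y x = (ip x y)^*.
Hypothesis ip_ge0 : forall x : H, 0 <= ip x x.
Hypothesis ip_eq0 : forall x : H, ip x x = 0 -> x = 0.

Lemma ipDl x y z : ip (x + y) z = ip x z + ip y z.
Proof. by rewrite -[x]scale1r ipD mul1r scale1r. Qed.

Lemma ip0l z : ip 0 z = 0.
Proof. by apply: (addrI (ip 0 z)); rewrite -ipDl !addr0. Qed.

Lemma ipZl k x z : ip (k *: x) z = k * ip x z.
Proof. by rewrite -[k *: x]addr0 ipD ip0l addr0. Qed.

Lemma ipNl x z : ip (- x) z = - ip x z.
Proof. by rewrite -scaleN1r ipZl mulN1r. Qed.

Lemma ip0r z : ip z 0 = 0.
Proof. by rewrite ipC ip0l conjC0. Qed.

Lemma ipDr x y z : ip z (x + y) = ip z x + ip z y.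
Proof. by rewrite !(ipC _ z) ipDl rmorphD. Qed.

Lemma ipZr k x z : ip z (k *: x) = k^* * ip z x.
Proof. by rewrite !(ipC _ z) ipZl rmorphM. Qed.

Lemma ipNr x z : ip z (- x) = - ip z x.
Proof. by rewrite !(ipC _ z) ipNl rmorphN. Qed.

Lemma ip_nsq x : ip x x = (nsq ip x)%:C.
Proof.
by have := ip_ge0 x; rewrite /nsq; case: (ip x x) => u v; rewrite lecE /= => /andP[/eqP ->].
Qed.

Lemma nsq_ge0 x : 0 <= nsq ip x.
Proof. by have := ip_ge0 x; rewrite ip_nsq lecE /= => /andP[]. Qed.

Lemma nsqZ k x : nsq ip (k *: x) = complex.Re (k * k^*) * nsq ip x.
Proof. by rewrite /nsq ipZl ipZr ip_nsq; case: k => u v /=; ring. Qed.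

Lemma nsqD_le x y : nsq ip (x + y) <= 2%:R * nsq ip x + 2%:R * nsq ip y.
Proof.
have parallelogram : ip (x + y) (x + y) + ip (x - y) (x - y) = 2%:R * ip x x + 2%:R * ip y y.
  by rewrite !ipDl !ipDr !ipNl !ipNr opprK; ring.
move: parallelogram; rewrite !ip_nsq => /(congr1 (@complex.Re R)) /=.
have := nsq_ge0 (x - y); lra.
Qed.

Definition selfadjoint (f : H -> H) := forall x y, ip (f x) y = ip x (f y).

Definition bounded (f : H -> H) := exists M : R, forall x, nsq ip (f x) <= M * nsq ip x.

Definition injective_on_range (f p : H -> H) := forall h, p h = h -> f h = 0 -> h = 0.

Lemma projection_spec a : projection ip a ->
  [/\ linear a, bounded a, selfadjoint a & forall x, a (a x) = a x].
Proof. by move=> [[[la ba] sa] aa]; split=> // x; rewrite -[in RHS]aa. Qed.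

Section LinearFun.
Variable f : H -> H.
Hypothesis lf : linear f.

Lemma linfun0 : f 0 = 0.
Proof.
have f00 := lf 1 0 0; rewrite scale1r addr0 scale1r in f00.
by apply: (@addrI _ (f 0)); rewrite addr0 -f00.
Qed.

Lemma linfunZ k x : f (k *: x) = k *: f x.
Proof. by rewrite -[k *: x]addr0 lf linfun0 addr0. Qed.

Lemma linfunD x y : f (x + y) = f x + f y.
Proof. by rewrite -[x]scale1r lf !scale1r. Qed.

Lemma linfun_sum n (F : 'I_n -> H) : f (\sum_(i < n) F i) = \sum_(i < n) f (F i).
Proof. exact: (big_morph f linfunD linfun0). Qed.

End LinearFun.

Lemma lin_comp (f g : H -> H) : linear f -> linear g -> linear (f \o g).
Proof. by move=> lf lg k x y /=; rewrite lg lf. Qed.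

Lemma lin_scale (k : C) (f : H -> H) : linear f -> linear (fun h => k *: f h).
Proof. by move=> lf c x y; rewrite lf scalerDr !scalerA mulrC. Qed.

Lemma lin_sum n (F : 'I_n -> H -> H) :
  (forall i, linear (F i)) -> linear (fun h => \sum_(i < n) F i h).
Proof.
by move=> lF c x y; rewrite scaler_sumr -big_split; apply: eq_bigr => i _; apply: lF.
Qed.

Lemma lin_iter (f : H -> H) n : linear f -> linear (iter n f).
Proof. by move=> lf; elim: n => [|n IH] // c x y /=; rewrite IH lf. Qed.

Lemma bounded_id : bounded id.
Proof. by exists 1 => x; rewrite mul1r. Qed.

Lemma bounded_comp (f g : H -> H) : bounded f -> bounded g -> bounded (f \o g).
Proof.
move=> [M hM] [N hN]; exists (`|M| * N) => x /=.
apply: (le_trans (hM _)); apply: (le_trans (y := `|M| * nsq ip (g x))).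
  by apply: ler_wpM2r; [exact: nsq_ge0 | exact: ler_norm].
by rewrite -mulrA; apply: ler_wpM2l.
Qed.

Lemma bounded_scale (k : C) (f : H -> H) : bounded f -> bounded (fun h => k *: f h).
Proof.
move=> [M hM]; exists (complex.Re (k * k^*) * M) => x; rewrite nsqZ -mulrA.
apply: ler_wpM2l => //; case: k => u v /=; nra.
Qed.

Lemma bounded_sum n (F : 'I_n -> H -> H) :
  (forall i, bounded (F i)) -> bounded (fun h => \sum_(i < n) F i h).
Proof.
elim: n F => [|n IH] F bF.
  by exists 0 => x; rewrite big_ord0 mul0r /nsq ip0l.
have [M hM] := IH _ (fun i => bF (lift ord0 i)); have [N hN] := bF ord0.
exists (2%:R * N + 2%:R * M) => x; rewrite big_ord_recl.
apply: (le_trans (nsqD_le _ _)); have := hM x; have := hN x; lra.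
Qed.

Lemma bounded_iter (f : H -> H) n : bounded f -> bounded (iter n f).
Proof.
move=> bf; elim: n => [|n IH]; first exact: bounded_id.
by have [M hM] := bounded_comp bf IH; exists M.
Qed.

Section Frames.
Variable r : nat.

Definition vec (e : 'I_r -> H) (c : 'rV[C]_r) : H := \sum_(i < r) c 0 i *: e i.

Lemma vec_is_linear e : linear (vec e).
Proof.
move=> k c d; rewrite /vec scaler_sumr -big_split; apply: eq_bigr => i _.
by rewrite !mxE scalerDl scalerA.
Qed.

HB.instance Definition _ e := GRing.isLinear.Build C 'rV[C]_r H *:%R (vec e) (vec_is_linear e).

Definition frame (p : H -> H) (e : 'I_r -> H) :=
  [/\ forall i, p (e i) = e i, forall y, exists c, p y = vec e c
    & forall c, vec e c = 0 -> c = 0].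

Lemma range_dim_frame p : (forall x, p (p x) = p x) -> range_dim p r -> exists e, frame p e.
Proof.
move=> pp [e [e_range e_span e_free]]; exists e; split.
- by move=> i; have [z ->] := e_range i; rewrite pp.
- move=> y; have [c ->] := e_span y; exists (\row_i c i).
  by apply: eq_bigr => i _; rewrite mxE.
- move=> c c0; apply/rowP => i; rewrite mxE.
  exact: (e_free (fun j => c 0 j)).
Qed.

Lemma linfun_vec (f : H -> H) e c : linear f -> f (vec e c) = \sum_(i < r) c 0 i *: f (e i).
Proof. by move=> lf; rewrite linfun_sum //; apply: eq_bigr => i _; rewrite linfunZ. Qed.

Lemma frame_vec_fixed p e c : linear p -> frame p e -> p (vec e c) = vec e c.
Proof. by move=> lp [pe _ _]; rewrite linfun_vec //; apply: eq_bigr => i _; rewrite pe. Qed.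

Lemma frame_mx e q f (L : H -> H) :
  linear L -> frame q f -> (forall i, q (L (e i)) = L (e i)) ->
  exists M : 'M_r, forall c, L (vec e c) = vec f (c *m M).
Proof.
move=> lL [_ f_span _] Le_range.
have [F hF] := fin_all_exists (fun i => f_span (L (e i))).
exists (\matrix_i F i) => c; rewrite linfun_vec // mulmx_sum_row linear_sum.
by apply: eq_bigr => i _; rewrite -Le_range hF linearZ rowK.
Qed.

Lemma frame_mx_unit p e f (L : H -> H) (M : 'M_r) :
  linear p -> frame p e -> injective_on_range L p ->
  (forall c, L (vec e c) = vec f (c *m M)) -> M \in unitmx.
Proof.
move=> lp fe L_inj LM; rewrite -row_free_unit; apply: inj_row_free => v vM0.
have [_ _ e_free] := fe; apply: e_free; apply: L_inj; first exact: frame_vec_fixed.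
by rewrite LM vM0 linear0.
Qed.

End Frames.

(* [a] maps ran b onto ran a, so h in ran a with b h = 0 is [a g] for some g
   in ran b, and then <h,h> = <g,b h> = 0. *)
Lemma injective_on_range_sym r a b (ea eb : 'I_r -> H) :
  projection ip a -> projection ip b -> frame a ea -> frame b eb ->
  injective_on_range a b -> injective_on_range b a.
Proof.
move=> /projection_spec[la _ sa aa] /projection_spec[lb _ sb _] fa fb a_inj h ah bh.
have [M aM] := frame_mx (e := eb) la fa (fun i => aa _).
have uM := frame_mx_unit lb fb a_inj aM.
have [_ a_span _] := fa; have [c hc] := a_span h.
pose g := vec eb (c *m invmx M).
have ag : a g = h by rewrite /g aM mulmxKV // -hc ah.
have bg : b g = g by apply: frame_vec_fixed.
by apply: ip_eq0; rewrite -{1}ag sa ah -bg sb bh ip0r.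
Qed.

Lemma jinvertible_injective_on_range a b : projection ip a -> projection ip b ->
  jinvertible ip b (b \o a \o b) -> injective_on_range a b.
Proof.
move=> /projection_spec[_ _ sa _] /projection_spec[lb _ sb bb].
move=> [y [[X [[[lX _] _] ->]] jb _]] h bh ah.
have := equal_f jb h; rewrite /jprod /= !bb bh ah (linfun0 lb) (linfun0 lX) (linfun0 lb) addr0.
move=> bab_h; apply: ip_eq0.
by rewrite -{1}bab_h ipZl sb sa sb bh ah (linfun0 lb) ip0r mulr0.
Qed.

Lemma injective_on_range_compress a b : projection ip a -> projection ip b ->
  injective_on_range b a -> injective_on_range (a \o b \o a) a.
Proof.
move=> /projection_spec[_ _ sa _] /projection_spec[_ _ sb bb] b_inj h ah abah.
have abh : a (b h) = 0 by rewrite -abah /= ah.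
apply: b_inj => //; apply: ip_eq0.
by rewrite -(sb (b h) h) bb -{2}ah -(sa (b h) h) abh ip0l.
Qed.

Lemma selfadjoint_inverse a x Q : selfadjoint a -> selfadjoint x ->
  (forall h, a (Q h) = Q h) -> (forall h, x (Q h) = a h) -> selfadjoint Q.
Proof. by move=> sa sx aQ xQ h k; rewrite -aQ sa -{1}(xQ k) -sx xQ sa aQ. Qed.

Lemma jinvertible_of_inverse a x Q : selfadj_bdd ip Q ->
  (forall h, a (Q (a h)) = Q h) -> (forall h, x (Q h) = a h) -> (forall h, Q (x h) = a h) ->
  (forall h, a (x h) = x h) -> (forall h, x (a h) = x h) -> jinvertible ip a x.
Proof.
move=> saQ aQa xQ Qx ax xa.
have half_double (u : H) : 2%:R^-1 *: (u + u) = u.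
  by rewrite -mulr2n -(scaler_nat 2 u) scalerA mulVf ?scale1r // pnatr_eq0.
exists Q; split.
- by exists Q; split=> //; apply: functional_extensionality => h /=; rewrite aQa.
- by apply: functional_extensionality => h; rewrite /jprod xQ Qx half_double.
- apply: functional_extensionality => h.
  by rewrite /jprod !half_double xQ Qx xa ax half_double.
Qed.

Definition opoly (p : {poly C}) (x : H -> H) (h : H) : H :=
  \sum_(i < size p) p`_i *: iter i x h.

Lemma linear_opoly p x : linear x -> linear (opoly p x).
Proof. by move=> lx; apply: lin_sum => i; apply: lin_scale; apply: lin_iter. Qed.

Lemma bounded_opoly p x : bounded x -> bounded (opoly p x).
Proof. by move=> bx; apply: bounded_sum => i; apply: bounded_scale; apply: bounded_iter. Qed.

Lemma opoly_vec n (e : 'I_n.+1 -> H) x (M : 'M_n.+1) p c : linear x ->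
  (forall d, x (vec e d) = vec e (d *m M)) -> opoly p x (vec e c) = vec e (c *m horner_mx M p).
Proof.
move=> lx xM.
have iterM i d : iter i x (vec e d) = vec e (d *m M ^+ i).
  elim: i d => [|i IH] d /=; first by rewrite expr0 mulmx1.
  by rewrite IH xM exprSr mulmxA.
have hornerM : horner_mx M p = \sum_(i < size p) p`_i *: M ^+ i.
  rewrite -{1}(coefK p) poly_def linear_sum; apply: eq_bigr => i _.
  by rewrite linearZ rmorphXn /= horner_mx_X.
rewrite hornerM mulmx_sumr linear_sum; apply: eq_bigr => i _.
by rewrite iterM -scalemxAr linearZ.
Qed.

(* The inverse of [x] on ran a is a polynomial in [x] (Cayley-Hamilton on the
   matrix of [x]), which makes it bounded without estimating coordinates. *)
Lemma jinvertible_of_injective n a x (e : 'I_n.+1 -> H) :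
  projection ip a -> frame a e -> linear x -> bounded x -> selfadjoint x ->
  (forall h, a (x h) = x h) -> (forall h, x (a h) = x h) ->
  injective_on_range x a -> jinvertible ip a x.
Proof.
move=> /projection_spec[la ba sa aa] fa lx bx sx ax xa x_inj.
have [M xM] := frame_mx (e := e) lx fa (fun i => ax _).
have uM := frame_mx_unit la fa x_inj xM.
have [q qM] := invmx_horner uM.
pose Q := opoly q x \o a.
have Q_vec h : exists c, a h = vec e c /\ Q h = vec e (c *m invmx M).
  have [_ a_span _] := fa; have [c hc] := a_span h.
  by exists c; split=> //; rewrite /Q /= hc (opoly_vec _ _ lx xM) qM.
have xQ h : x (Q h) = a h by have [c [-> ->]] := Q_vec h; rewrite xM mulmxKV.
have Qx h : Q (x h) = a h.
  have [c [ah _]] := Q_vec h.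
  by rewrite /Q /= ax -(xa h) ah xM (opoly_vec _ _ lx xM) -qM mulmxK.
have aQ h : a (Q h) = Q h by have [c [_ ->]] := Q_vec h; apply: frame_vec_fixed.
apply: (jinvertible_of_inverse (Q := Q)) => //; last by move=> h; rewrite aQ /Q /= aa.
split; last exact: selfadjoint_inverse sa sx aQ xQ.
split; [exact: lin_comp (linear_opoly q lx) la | exact: bounded_comp (bounded_opoly q bx) ba].
Qed.

Lemma jinvertible_sym n a b (ea eb : 'I_n.+1 -> H) :
  projection ip a -> projection ip b -> frame a ea -> frame b eb ->
  jinvertible ip b (b \o a \o b) -> jinvertible ip a (a \o b \o a).
Proof.
move=> pa pb fa fb jb.
have b_inj := injective_on_range_sym pa pb fa fb (jinvertible_injective_on_range pa pb jb).
have [[la ba sa aa] [lb bb sb _]] := (projection_spec pa, projection_spec pb).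
apply: (jinvertible_of_injective pa fa).
- exact: lin_comp (lin_comp la lb) la.
- exact: bounded_comp (bounded_comp ba bb) ba.
- by move=> h k /=; rewrite sa sb sa.
- by move=> h /=; rewrite aa.
- by move=> h /=; rewrite aa.
- exact: injective_on_range_compress pa pb b_inj.
Qed.

Lemma antipodal_sym r a b : (0 < r)%N -> proj_rank ip r a -> proj_rank ip r b ->
  antipodal ip r a b -> antipodal ip r b a.
Proof.
case: r => // n _ [pa ra] [pb rb] [_ not_ja]; split=> [|jb]; first by [].
have [[_ _ _ aa] [_ _ _ bb]] := (projection_spec pa, projection_spec pb).
have [[ea fa] [eb fb]] := (range_dim_frame aa ra, range_dim_frame bb rb).
exact/not_ja/(jinvertible_sym pa pb fa fb).
Qed.

End InnerProductSpace.

Theorem corollary4p9 (R : realType) (H : lmodType R[i]) (ip : H -> H -> R[i])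
  (hH : is_hilbert_space ip) (r : nat) (hr : (0 < r)%N) (a b : H -> H)
  (ha : proj_rank ip r a) (hb : proj_rank ip r b) :
  antipodal ip r a b <-> antipodal ip r b a.
Proof.
case: hH => ipD ipC ip_ge0 ip_eq0 _.
by split; apply: (antipodal_sym ipD ipC ip_ge0 ip_eq0).
Qed.
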